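(* Let $p\in(0,1)$, let $(\mathcal M,d,0)$ be a pointed $p$-metric space with $\mathcal M=\{0,x,y,z\}$ (four distinct points), and let $a\in\mathbb R^{\mathcal M\setminus\{0\}}$ with $a_z=0$. Let $T$ be the tree on $\mathcal M$ rooted at $0$ with edges $\{0,z\},\{z,x\},\{z,y\}$. Put $d_{x0}=d(x,0)$, $d_{y0}=d(y,0)$, $d_{xy}=d(x,y)$ and \[C:=|a_x+a_y|^p\frac{d_{x0}^p+d_{y0}^p-d_{xy}^p}{2}+|a_x|^p\frac{d_{xy}^p+d_{x0}^p-d_{y0}^p}{2}+|a_y|^p\frac{d_{xy}^p+d_{y0}^p-d_{x0}^p}{2}.\] Then $T(a)^p\ge C$ and \[C\le\|a_x\delta(x)+a_y\delta(y)\|_{\mathcal F_p(\{0,x,y\})}^p,\] with equality in the latter inequality if and only if at least one of the following holds: $d_{x0}^p+d_{y0}^p=d_{xy}^p$, $d_{x0}^p+d_{xy}^p=d_{y0}^p$, $d_{y0}^p+d_{xy}^p=d_{x0}^p$, $a_xa_y=0$, $a_x=-a_y$.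
   Context: A $p$-metric space is a set with $d$ such that $d^p$ is a metric; pointed means a distinguished point $0$. A $p$-Banach space is a complete vector space with a $p$-norm. $\delta(x)$ is evaluation at $x$ on real functions vanishing at $0$, and $\mathcal F_p$ of a pointed $p$-metric space is the completion of $\mathrm{span}\{\delta(x)\}$ under $\|\sum a_i\delta(x_i)\|=\sup\|\sum a_if(x_i)\|_Y$ over $p$-Banach $Y$ and $1$-Lipschitz $f$ into $Y$ vanishing at $0$; $\{0,x,y\}$ carries the restricted metric. For the rooted tree $T$ and $w\ne0$: $\mathrm{pred}_T(w)$ is the neighbour of $w$ on the path to $0$, $V_w^T$ the vertex set of the subtree rooted at $w$, and $T(a)=\big(\sum_{w\in\mathcal M\setminus\{0\}}|(\sum_{v\in V_w^T}a_v)d(\mathrm{pred}_T(w),w)|^p\big)^{1/p}$. *)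

From Stdlib Require Import Reals Lra List.
From Coquelicot Require Import Coquelicot.
Open Scope R_scope.

(* Real power x^q for x >= 0, with the convention 0^q = 0 (q > 0 in all uses).
   (Stdlib's Rpower 0 q would be 1, hence this wrapper.) *)
Definition rpow (x q : R) : R := if Rle_dec x 0 then 0 else Rpower x q.

Definition is_pmetric (p : R) {S : Type} (d : S -> S -> R) : Prop :=
  (forall u v, 0 <= d u v) /\
  (forall u v, d u v = 0 <-> u = v) /\
  (forall u v, d u v = d v u) /\
  (forall u v w, rpow (d u w) p <= rpow (d u v) p + rpow (d v w) p).

Record pBanach (p : R) := PBanach {
  pB_space :> ModuleSpace R_Ring;
  pB_norm : pB_space -> R;
  pB_norm_ge0 : forall v, 0 <= pB_norm v;
  pB_norm_eq0 : forall v, pB_norm v = 0 -> v = zero;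
  pB_norm_scal : forall (l : R) v, pB_norm (scal l v) = Rabs l * pB_norm v;
  pB_norm_ptri : forall u v,
      rpow (pB_norm (plus u v)) p <= rpow (pB_norm u) p + rpow (pB_norm v) p;
  pB_complete : forall u : nat -> pB_space,
      (forall eps, 0 < eps -> exists N, forall m n, (N <= m)%nat -> (N <= n)%nat ->
         pB_norm (minus (u m) (u n)) < eps) ->
      exists l, forall eps, 0 < eps -> exists N, forall n, (N <= n)%nat ->
         pB_norm (minus (u n) l) < eps
}.
Arguments pB_norm {p} _ _.

Fixpoint vsum {V : ModuleSpace R_Ring} (l : list V) : V :=
  match l with nil => zero | cons v l' => plus v (vsum l') end.

(* Norm in F_p(S,d,s0) of the finitely supported element sum_i c_i delta(s_i),
   given as the list of pairs (c_i, s_i):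
   sup over p-Banach Y and 1-Lipschitz f : S -> Y with f s0 = 0 of
   || sum_i c_i f(s_i) ||_Y.  (The completion does not affect the norm of
   elements of the span.) *)
Definition Fp_norm_set (p : R) {S : Type} (d : S -> S -> R) (s0 : S)
    (c : list (R * S)) : R -> Prop :=
  fun r => exists (Y : pBanach p) (f : S -> Y),
    f s0 = zero /\
    (forall u v, pB_norm Y (minus (f u) (f v)) <= d u v) /\
    r = pB_norm Y (vsum (map (fun cs => scal (fst cs) (f (snd cs))) c)).

Definition Fp_norm (p : R) {S : Type} (d : S -> S -> R) (s0 : S)
    (c : list (R * S)) : R :=
  real (Lub_Rbar (Fp_norm_set p d s0 c)).

Inductive pt4 : Type := P0 | Px | Py | Pz.

Definition sub3 : Type := { m : pt4 | m = P0 \/ m = Px \/ m = Py }.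
Definition s3_0 : sub3 := exist _ P0 (or_introl eq_refl).
Definition s3_x : sub3 := exist _ Px (or_intror (or_introl eq_refl)).
Definition s3_y : sub3 := exist _ Py (or_intror (or_intror eq_refl)).
Definition d3 (d : pt4 -> pt4 -> R) (u v : sub3) : R := d (proj1_sig u) (proj1_sig v).

(* The functional T(a) for a rooted tree, given its non-root vertices,
   the predecessor map and the vertex sets V_w of the subtrees rooted at w. *)
Fixpoint Rsum_list (l : list R) : R :=
  match l with nil => 0 | cons r l' => r + Rsum_list l' end.

Definition tree_T {M : Type} (p : R) (nonroot : list M) (pred : M -> M)
    (V : M -> list M) (d : M -> M -> R) (a : M -> R) : R :=
  rpow (Rsum_list (map (fun w =>
           rpow (Rabs (Rsum_list (map a (V w)) * d (pred w) w)) p) nonroot))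
       (1 / p).

Definition T4_nonroot : list pt4 := Px :: Py :: Pz :: nil.
Definition T4_pred (w : pt4) : pt4 :=
  match w with P0 => P0 | Px => Pz | Py => Pz | Pz => P0 end.
Definition T4_V (w : pt4) : list pt4 :=
  match w with
  | P0 => P0 :: Px :: Py :: Pz :: nil
  | Px => Px :: nil
  | Py => Py :: nil
  | Pz => Pz :: Px :: Py :: nil
  end.

From Stdlib Require Import Reals Lra Lia.
From Coquelicot Require Import Coquelicot.
Open Scope R_scope.

(* Write d_uv for d(u, v)^p.  Over the triangle {0, x, y} the p-th power of the
   F_p norm of a_x δ(x) + a_y δ(y) is exactly the least of its costs along the
   three spanning trees, d_y0|a_x+a_y|^p + d_xy|a_x|^p, d_x0|a_x+a_y|^p + d_xy|a_y|^p
   and d_x0|a_x|^p + d_y0|a_y|^p.  The upper bound rewrites a_x f(x) + a_y f(y)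
   along each tree and uses the p-triangle inequality; the bound is attained in
   the quotient of the weighted l_p space on the three edges by the cycle, where
   t |-> Σ k_i |t - b_i|^p, concave between breakpoints, is least at a breakpoint.
   Each tree cost exceeds C by a Gromov product of d^p times a triangle defect of
   (|a_x+a_y|^p, |a_x|^p, |a_y|^p), both nonnegative; strict subadditivity of
   t |-> t^p then locates the equality cases.  For T(a)^p the same bookkeeping
   with the edge lengths of T, together with the p-triangle inequalities through
   z, gives C <= T(a)^p. *)

(** * Real powers *)

Lemma rpow_0 q : rpow 0 q = 0.
Proof. unfold rpow; destruct (Rle_dec 0 0); lra. Qed.

Lemma rpow_Rpower x q : 0 < x -> rpow x q = Rpower x q.
Proof. intros; unfold rpow; destruct (Rle_dec x 0); [lra | reflexivity]. Qed.

Lemma rpow_gt0 x q : 0 < x -> 0 < rpow x q.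
Proof. intros; rewrite rpow_Rpower by lra; apply exp_pos. Qed.

Lemma rpow_ge0 x q : 0 <= rpow x q.
Proof.
  destruct (Rlt_le_dec 0 x) as [Hx | Hx]; [left; apply rpow_gt0; lra |].
  unfold rpow; destruct (Rle_dec x 0); [lra | contradiction].
Qed.

Lemma rpow_eq0 x q : 0 <= x -> rpow x q = 0 -> x = 0.
Proof. intros [Hx | Hx] H; [pose proof (rpow_gt0 x q Hx) |]; lra. Qed.

Lemma rpow_1 x : 0 <= x -> rpow x 1 = x.
Proof.
  intros [Hx | <-]; [rewrite rpow_Rpower by lra; apply Rpower_1, Hx | apply rpow_0].
Qed.

Lemma rpow_1_l q : rpow 1 q = 1.
Proof. rewrite rpow_Rpower by lra; unfold Rpower; rewrite ln_1, Rmult_0_r; apply exp_0. Qed.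

Lemma rpow_le x y q : 0 < q -> 0 <= x <= y -> rpow x q <= rpow y q.
Proof.
  intros Hq [[Hx | <-] Hxy]; [| rewrite rpow_0; apply rpow_ge0].
  rewrite !rpow_Rpower by lra; apply Rle_Rpower_l; lra.
Qed.

Lemma rpow_lt x y q : 0 < q -> 0 <= x < y -> rpow x q < rpow y q.
Proof.
  intros Hq [[Hx | <-] Hxy]; [| rewrite rpow_0; apply rpow_gt0, Hxy].
  rewrite !rpow_Rpower by lra; apply Rlt_Rpower_l; lra.
Qed.

Lemma rpow_le_reg x y q : 0 < q -> 0 <= y -> rpow x q <= rpow y q -> x <= y.
Proof.
  intros Hq Hy H; destruct (Rle_lt_dec x y) as [| Hyx]; [assumption |].
  pose proof (rpow_lt y x q Hq (conj Hy Hyx)); lra.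
Qed.

Lemma rpow_lt_reg x y q : 0 < q -> 0 <= x -> rpow x q < rpow y q -> x < y.
Proof.
  intros Hq Hx H; destruct (Rlt_le_dec x y) as [| Hyx]; [assumption |].
  destruct (Rle_lt_dec 0 y) as [Hy | Hy].
  - pose proof (rpow_le y x q Hq (conj Hy Hyx)); lra.
  - unfold rpow at 2 in H; destruct (Rle_dec y 0); [pose proof (rpow_ge0 x q) | ]; lra.
Qed.

Lemma rpow_mult_distr x y q : 0 <= x -> 0 <= y -> rpow (x * y) q = rpow x q * rpow y q.
Proof.
  intros [Hx | <-] [Hy | <-]; rewrite ?Rmult_0_l, ?Rmult_0_r, ?rpow_0; try ring.
  rewrite !rpow_Rpower by nra; symmetry; apply Rpower_mult_distr; lra.
Qed.

Lemma rpow_rpow x q r : 0 <= x -> rpow (rpow x q) r = rpow x (q * r).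
Proof.
  intros [Hx | <-]; [| rewrite !rpow_0; reflexivity].
  rewrite (rpow_Rpower x q), !rpow_Rpower by (try apply exp_pos; lra).
  apply Rpower_mult.
Qed.

Lemma rpow_rpow_inv x q : 0 < q -> 0 <= x -> rpow (rpow x q) (1 / q) = x.
Proof.
  intros; rewrite rpow_rpow by lra; replace (q * (1 / q)) with 1 by (field; lra).
  apply rpow_1; assumption.
Qed.

Lemma rpow_inv_rpow x q : 0 < q -> 0 <= x -> rpow (rpow x (1 / q)) q = x.
Proof.
  intros; rewrite rpow_rpow by lra; replace (1 / q * q) with 1 by (field; lra).
  apply rpow_1; assumption.
Qed.

(** * Concavity and subadditivity of t^p *)

Section Concavity.

Variable p : R.
Hypothesis Hp : 0 < p < 1.

(* Weighted AM-GM for [r = e^L]: convexity of exp at [0] and at [L] seen from [pL]. *)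
Lemma Rpower_le_bernoulli r : 0 < r -> Rpower r p <= 1 + p * (r - 1).
Proof.
  intros Hr; unfold Rpower; set (L := ln r).
  assert (Er : exp L = r) by (apply exp_ln; exact Hr).
  set (E := exp (p * L)).
  assert (EF : E * exp (- (p * L)) = 1)
    by (unfold E; rewrite <- exp_plus, Rplus_opp_r; apply exp_0).
  assert (EG : E * exp ((1 - p) * L) = r)
    by (unfold E; rewrite <- exp_plus, <- Er; f_equal; ring).
  pose proof (exp_ineq1_le (- (p * L))); pose proof (exp_ineq1_le ((1 - p) * L)).
  assert (0 < E) by apply exp_pos.
  rewrite <- EG.
  assert (0 <= E * ((1 - p) * (exp (- (p * L)) - (1 + - (p * L)))
                    + p * (exp ((1 - p) * L) - (1 + (1 - p) * L)))).
  { apply Rmult_le_pos; [lra |]; apply Rplus_le_le_0_compat; apply Rmult_le_pos; lra. }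
  nra.
Qed.

Lemma rpow_le_tangent x m : 0 < m -> 0 <= x ->
  rpow x p <= rpow m p + p * Rpower m (p - 1) * (x - m).
Proof.
  intros Hm Hx.
  assert (Hmp : Rpower m p = Rpower m (p - 1) * m).
  { rewrite <- (Rpower_1 m) at 3 by exact Hm; rewrite <- Rpower_plus; f_equal; ring. }
  assert (0 < Rpower m (p - 1)) by apply exp_pos.
  rewrite (rpow_Rpower m), Hmp by exact Hm.
  destruct Hx as [Hx | <-].
  - rewrite rpow_Rpower by exact Hx.
    replace x with (x / m * m) at 1 by (field; lra).
    rewrite <- Rpower_mult_distr, Hmp by (try apply Rdiv_lt_0_compat; lra).
    pose proof (Rpower_le_bernoulli (x / m) ltac:(apply Rdiv_lt_0_compat; lra)).
    apply Rle_trans with ((1 + p * (x / m - 1)) * (Rpower m (p - 1) * m)).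
    + apply Rmult_le_compat_r; nra.
    + right; field; lra.
  - rewrite rpow_0.
    assert (0 <= Rpower m (p - 1) * m * (1 - p)) by (apply Rmult_le_pos; nra).
    nra.
Qed.

Lemma rpow_concave x y l : 0 <= x -> 0 <= y -> 0 <= l <= 1 ->
  l * rpow x p + (1 - l) * rpow y p <= rpow (l * x + (1 - l) * y) p.
Proof.
  intros Hx Hy Hl; set (m := l * x + (1 - l) * y).
  assert (Hm : 0 <= m) by (unfold m; nra).
  destruct Hm as [Hm | Hm].
  - pose proof (rpow_le_tangent x m Hm Hx); pose proof (rpow_le_tangent y m Hm Hy).
    set (k := p * Rpower m (p - 1)) in *.
    apply Rle_trans with (l * (rpow m p + k * (x - m)) + (1 - l) * (rpow m p + k * (y - m))).
    + apply Rplus_le_compat; apply Rmult_le_compat_l; lra.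
    + right; unfold m; ring.
  - assert (l * x = 0 /\ (1 - l) * y = 0) as [Hlx Hly] by (unfold m in Hm; nra).
    assert (Hvanish : forall c z, c * z = 0 -> c * rpow z p = 0).
    { intros c z Hcz; destruct (Rmult_integral _ _ Hcz) as [-> | ->];
        [| rewrite rpow_0]; ring. }
    rewrite <- Hm, rpow_0, (Hvanish _ _ Hlx), (Hvanish _ _ Hly); lra.
Qed.

(* [x^p = x * x^(p-1)] and [t^(p-1)] is decreasing. *)
Lemma rpow_add_lt x y : 0 < x -> 0 < y -> rpow (x + y) p < rpow x p + rpow y p.
Proof.
  intros Hx Hy; rewrite !rpow_Rpower by lra.
  assert (Hd : forall z, 0 < z -> Rpower z p = z * / Rpower z (1 - p)).
  { intros z Hz; replace p with (1 + - (1 - p)) at 1 by ring.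
    rewrite Rpower_plus, Rpower_1, Rpower_Ropp by exact Hz; reflexivity. }
  rewrite !Hd by lra.
  assert (Rpower x (1 - p) < Rpower (x + y) (1 - p)) by (apply Rlt_Rpower_l; lra).
  assert (Rpower y (1 - p) < Rpower (x + y) (1 - p)) by (apply Rlt_Rpower_l; lra).
  assert (0 < Rpower x (1 - p) /\ 0 < Rpower y (1 - p)) as [] by (split; apply exp_pos).
  assert (/ Rpower (x + y) (1 - p) < / Rpower x (1 - p)) by (apply Rinv_lt_contravar; nra).
  assert (/ Rpower (x + y) (1 - p) < / Rpower y (1 - p)) by (apply Rinv_lt_contravar; nra).
  nra.
Qed.

Lemma rpow_add_le x y : 0 <= x -> 0 <= y -> rpow (x + y) p <= rpow x p + rpow y p.
Proof.
  intros [Hx | <-] [Hy | <-]; rewrite ?Rplus_0_l, ?Rplus_0_r, ?rpow_0; try lra.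
  left; apply rpow_add_lt; assumption.
Qed.

Lemma rpow_abs_add_le u v :
  rpow (Rabs (u + v)) p <= rpow (Rabs u) p + rpow (Rabs v) p.
Proof.
  apply Rle_trans with (rpow (Rabs u + Rabs v) p).
  - apply rpow_le; [lra |]; split; [apply Rabs_pos | apply Rabs_triang].
  - apply rpow_add_le; apply Rabs_pos.
Qed.

Lemma rpow_abs_add_eq u v :
  rpow (Rabs (u + v)) p = rpow (Rabs u) p + rpow (Rabs v) p <-> u = 0 \/ v = 0.
Proof.
  split.
  - intros E; destruct (Req_dec u 0) as [| Hu]; [now left |].
    destruct (Req_dec v 0) as [| Hv]; [now right |].
    exfalso; apply (Rlt_irrefl (rpow (Rabs (u + v)) p)); rewrite E at 2.
    apply Rle_lt_trans with (rpow (Rabs u + Rabs v) p).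
    + apply rpow_le; [lra |]; split; [apply Rabs_pos | apply Rabs_triang].
    + apply rpow_add_lt; apply Rabs_pos_lt; assumption.
  - intros [-> | ->]; rewrite ?Rplus_0_l, ?Rplus_0_r, Rabs_R0, rpow_0; ring.
Qed.

Lemma rpow_abs_concave b c e l : 0 <= l <= 1 ->
  (e <= b /\ e <= c) \/ (b <= e /\ c <= e) ->
  l * rpow (Rabs (b - e)) p + (1 - l) * rpow (Rabs (c - e)) p
  <= rpow (Rabs (l * b + (1 - l) * c - e)) p.
Proof.
  intros Hl [[Hb Hc] | [Hb Hc]].
  - rewrite !Rabs_right by nra.
    replace (l * b + (1 - l) * c - e) with (l * (b - e) + (1 - l) * (c - e)) by ring.
    apply rpow_concave; lra.
  - rewrite !Rabs_left1 by nra.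
    replace (- (l * b + (1 - l) * c - e)) with (l * - (b - e) + (1 - l) * - (c - e)) by ring.
    apply rpow_concave; lra.
Qed.

Lemma rpow_abs_triangle a b :
  rpow (Rabs (a + b)) p <= rpow (Rabs a) p + rpow (Rabs b) p /\
  rpow (Rabs a) p <= rpow (Rabs (a + b)) p + rpow (Rabs b) p /\
  rpow (Rabs b) p <= rpow (Rabs (a + b)) p + rpow (Rabs a) p.
Proof.
  split; [| split].
  - apply rpow_abs_add_le.
  - rewrite <- (Rabs_Ropp b); replace a with ((a + b) + - b) at 1 by ring.
    apply rpow_abs_add_le.
  - rewrite <- (Rabs_Ropp a); replace b with ((a + b) + - a) at 1 by ring.
    apply rpow_abs_add_le.
Qed.

Lemma rpow_abs_triangle_eq a b :
  rpow (Rabs a) p + rpow (Rabs b) p = rpow (Rabs (a + b)) p \/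
  rpow (Rabs (a + b)) p + rpow (Rabs b) p = rpow (Rabs a) p \/
  rpow (Rabs (a + b)) p + rpow (Rabs a) p = rpow (Rabs b) p
  <-> a * b = 0 \/ a = - b.
Proof.
  set (S := rpow (Rabs (a + b)) p); set (U := rpow (Rabs a) p); set (V := rpow (Rabs b) p).
  assert (EU : U = rpow (Rabs ((a + b) + - b)) p) by (unfold U; f_equal; f_equal; ring).
  assert (EV : V = rpow (Rabs ((a + b) + - a)) p) by (unfold V; f_equal; f_equal; ring).
  pose proof (rpow_abs_add_eq a b) as E1.
  pose proof (rpow_abs_add_eq (a + b) (- b)) as E2.
  pose proof (rpow_abs_add_eq (a + b) (- a)) as E3.
  rewrite Rabs_Ropp in E2, E3; fold S U V in E1, E2, E3; rewrite <- EU in E2; rewrite <- EV in E3.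
  assert (Hab : a * b = 0 <-> a = 0 \/ b = 0)
    by (split; [apply Rmult_integral | intros [-> | ->]; ring]).
  rewrite Hab; split.
  - intros [H | [H | H]].
    + destruct (proj1 E1 (eq_sym H)); [left; left | left; right]; assumption.
    + destruct (proj1 E2 (eq_sym H)); [right | left; right]; lra.
    + destruct (proj1 E3 (eq_sym H)); [right | left; left]; lra.
  - intros [[Ha | Hb] | Hab'].
    + left; symmetry; apply E1; left; exact Ha.
    + left; symmetry; apply E1; right; exact Hb.
    + right; left; symmetry; apply E2; left; lra.
Qed.

End Concavity.

(** * Weighted sums of |t - b_i|^p *)

Lemma rpow_abs_sub_le_l p t b e : 0 < p -> t <= b -> b <= e ->
  rpow (Rabs (b - e)) p <= rpow (Rabs (t - e)) p.
Proof. intros; apply rpow_le; [| rewrite !Rabs_left1]; lra. Qed.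

Lemma rpow_abs_sub_le_r p t b e : 0 < p -> b <= t -> e <= b ->
  rpow (Rabs (b - e)) p <= rpow (Rabs (t - e)) p.
Proof. intros; apply rpow_le; [| rewrite !Rabs_right]; lra. Qed.

Definition dev3 p k1 k2 k3 b1 b2 b3 t :=
  k1 * rpow (Rabs (t - b1)) p + k2 * rpow (Rabs (t - b2)) p + k3 * rpow (Rabs (t - b3)) p.

Section Deviation3.

Variables p k1 k2 k3 b1 b2 b3 : R.
Hypothesis Hp : 0 < p < 1.
Hypotheses (Hk1 : 0 <= k1) (Hk2 : 0 <= k2) (Hk3 : 0 <= k3).

Let dev := dev3 p k1 k2 k3 b1 b2 b3.

Lemma dev3_ge0 t : 0 <= dev t.
Proof.
  unfold dev, dev3; pose proof (rpow_ge0 (Rabs (t - b1)) p).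
  pose proof (rpow_ge0 (Rabs (t - b2)) p); pose proof (rpow_ge0 (Rabs (t - b3)) p); nra.
Qed.

Lemma dev3_le_l t b : t <= b -> b <= b1 -> b <= b2 -> b <= b3 -> dev b <= dev t.
Proof.
  intros; unfold dev, dev3; repeat apply Rplus_le_compat;
    apply Rmult_le_compat_l; auto; apply rpow_abs_sub_le_l; lra.
Qed.

Lemma dev3_le_r t b : b <= t -> b1 <= b -> b2 <= b -> b3 <= b -> dev b <= dev t.
Proof.
  intros; unfold dev, dev3; repeat apply Rplus_le_compat;
    apply Rmult_le_compat_l; auto; apply rpow_abs_sub_le_r; lra.
Qed.

Lemma dev3_segment t b c : b < c -> b <= t <= c ->
  (b1 <= b \/ c <= b1) -> (b2 <= b \/ c <= b2) -> (b3 <= b \/ c <= b3) ->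
  Rmin (dev b) (dev c) <= dev t.
Proof.
  intros Hbc Ht E1 E2 E3; set (l := (c - t) / (c - b)).
  assert (Hl : 0 <= l <= 1).
  { unfold l; split; [apply Rdiv_le_0_compat | apply -> Rcomplements.Rdiv_le_1]; lra. }
  assert (Et : t = l * b + (1 - l) * c) by (unfold l; field; lra).
  assert (Hconc : forall e, e <= b \/ c <= e ->
    l * rpow (Rabs (b - e)) p + (1 - l) * rpow (Rabs (c - e)) p <= rpow (Rabs (t - e)) p).
  { intros e He; rewrite Et; apply rpow_abs_concave; [exact Hp | exact Hl | lra]. }
  pose proof (Rmin_l (dev b) (dev c)); pose proof (Rmin_r (dev b) (dev c)).
  apply Rle_trans with (l * dev b + (1 - l) * dev c); [nra |].
  unfold dev, dev3.
  pose proof (Hconc b1 E1); pose proof (Hconc b2 E2); pose proof (Hconc b3 E3).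
  apply Rle_trans with
    (k1 * (l * rpow (Rabs (b - b1)) p + (1 - l) * rpow (Rabs (c - b1)) p)
     + k2 * (l * rpow (Rabs (b - b2)) p + (1 - l) * rpow (Rabs (c - b2)) p)
     + k3 * (l * rpow (Rabs (b - b3)) p + (1 - l) * rpow (Rabs (c - b3)) p)).
  - right; ring.
  - repeat apply Rplus_le_compat; apply Rmult_le_compat_l; assumption.
Qed.

(* A sum of weighted [|t - b_i|^p] is monotone outside the breakpoints and
   concave between consecutive ones, so it is least at a breakpoint. *)
Lemma dev3_min_breakpoint t : Rmin (dev b1) (Rmin (dev b2) (dev b3)) <= dev t.
Proof.
  set (m := Rmin (dev b1) (Rmin (dev b2) (dev b3))).
  assert (M1 : m <= dev b1) by apply Rmin_l.
  assert (M2 : m <= dev b2) by (eapply Rle_trans; [apply Rmin_r | apply Rmin_l]).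
  assert (M3 : m <= dev b3) by (eapply Rle_trans; [apply Rmin_r | apply Rmin_r]).
  assert (Seg : forall b c, b < c -> b <= t <= c ->
     (b1 <= b \/ c <= b1) -> (b2 <= b \/ c <= b2) -> (b3 <= b \/ c <= b3) ->
     m <= dev b -> m <= dev c -> m <= dev t).
  { intros; apply Rle_trans with (Rmin (dev b) (dev c));
      [apply Rmin_glb | apply dev3_segment]; assumption. }
  assert (Left : forall b, t <= b -> b <= b1 -> b <= b2 -> b <= b3 -> m <= dev b -> m <= dev t).
  { intros; eapply Rle_trans; [eassumption | apply dev3_le_l; assumption]. }
  assert (Right : forall b, b <= t -> b1 <= b -> b2 <= b -> b3 <= b -> m <= dev b -> m <= dev t).
  { intros; eapply Rle_trans; [eassumption | apply dev3_le_r; assumption]. }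
  clearbody dev m.
  destruct (Rle_dec t b1), (Rle_dec t b2), (Rle_dec t b3),
    (Rle_dec b1 b2), (Rle_dec b1 b3), (Rle_dec b2 b3);
  first
  [ apply (Left b1); auto; lra | apply (Left b2); auto; lra | apply (Left b3); auto; lra
  | apply (Right b1); auto; lra | apply (Right b2); auto; lra | apply (Right b3); auto; lra
  | apply (Seg b1 b2); auto; lra | apply (Seg b2 b1); auto; lra
  | apply (Seg b1 b3); auto; lra | apply (Seg b3 b1); auto; lra
  | apply (Seg b2 b3); auto; lra | apply (Seg b3 b2); auto; lra ].
Qed.

End Deviation3.

Lemma dev3_scale p k1 k2 k3 b1 b2 b3 t l :
  dev3 p k1 k2 k3 (l * b1) (l * b2) (l * b3) (l * t)
  = rpow (Rabs l) p * dev3 p k1 k2 k3 b1 b2 b3 t.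
Proof.
  unfold dev3; rewrite <- !Rmult_minus_distr_l, !Rabs_mult, !rpow_mult_distr
    by apply Rabs_pos.
  ring.
Qed.

Lemma dev3_add p k1 k2 k3 b1 b2 b3 c1 c2 c3 t s :
  0 < p < 1 -> 0 <= k1 -> 0 <= k2 -> 0 <= k3 ->
  dev3 p k1 k2 k3 (b1 + c1) (b2 + c2) (b3 + c3) (t + s)
  <= dev3 p k1 k2 k3 b1 b2 b3 t + dev3 p k1 k2 k3 c1 c2 c3 s.
Proof.
  intros Hp Hk1 Hk2 Hk3; unfold dev3.
  assert (Hsub : forall k b c, 0 <= k ->
    k * rpow (Rabs (t + s - (b + c))) p
    <= k * rpow (Rabs (t - b)) p + k * rpow (Rabs (s - c)) p).
  { intros k b c Hk; rewrite <- Rmult_plus_distr_l; apply Rmult_le_compat_l; [exact Hk |].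
    replace (t + s - (b + c)) with ((t - b) + (s - c)) by ring.
    apply rpow_abs_add_le, Hp. }
  pose proof (Hsub k1 b1 c1 Hk1); pose proof (Hsub k2 b2 c2 Hk2);
    pose proof (Hsub k3 b3 c3 Hk3); lra.
Qed.

(** * The F_p norm over the triangle {0, x, y} *)

(* The three terms are the costs of [a e_x + b e_y] along the three spanning
   trees of the triangle [{0, x, y}] with edge weights [kx], [ky], [kxy]. *)
Definition triangle_tree_cost p kx ky kxy a b :=
  Rmin (ky * rpow (Rabs (a + b)) p + kxy * rpow (Rabs a) p)
    (Rmin (kx * rpow (Rabs (a + b)) p + kxy * rpow (Rabs b) p)
       (kx * rpow (Rabs a) p + ky * rpow (Rabs b) p)).

Definition R2 : ModuleSpace R_Ring := prod_ModuleSpace R_Ring R_ModuleSpace R_ModuleSpace.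

Section TriangleQuotient.

Variables p kx ky kxy : R.
Hypothesis Hp : 0 < p < 1.
Hypotheses (Hkx : 0 < kx) (Hky : 0 < ky) (Hkxy : 0 < kxy).

(* [w] stands for [w.1 e_x + w.2 e_y] in the free space of the triangle
   [{0, x, y}].  Writing it as [(w.1 - t) (e_x - e_0) + (w.2 + t) (e_y - e_0)
   + t (e_x - e_y)] costs [tri_cost w t] in the l_p sum over the edges weighted
   by [kx], [ky], [kxy].  The quotient by the cycle takes the least cost over
   [t], which is attained at a breakpoint of [tri_cost w] (dev3_min_breakpoint). *)
Definition tri_cost (w : R * R) (t : R) : R := dev3 p kx ky kxy (fst w) (- snd w) 0 t.

Definition tri_mincost (w : R * R) : R :=
  Rmin (tri_cost w (fst w)) (Rmin (tri_cost w (- snd w)) (tri_cost w 0)).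

Lemma tri_mincost_le w t : tri_mincost w <= tri_cost w t.
Proof. apply dev3_min_breakpoint; lra. Qed.

Lemma tri_mincost_attained w : exists t, tri_mincost w = tri_cost w t.
Proof.
  unfold tri_mincost, Rmin at 2; destruct (Rle_dec _ _);
    unfold Rmin; destruct (Rle_dec _ _); eauto.
Qed.

Lemma tri_mincost_ge0 w : 0 <= tri_mincost w.
Proof. destruct (tri_mincost_attained w) as [t ->]; apply dev3_ge0; lra. Qed.

Lemma tri_mincost_pair a1 a2 : tri_mincost (a1, a2) = triangle_tree_cost p kx ky kxy a1 a2.
Proof.
  unfold tri_mincost, tri_cost, dev3, triangle_tree_cost; cbn [fst snd].
  replace (a1 - a1) with 0 by ring; replace (a1 - - a2) with (a1 + a2) by ring;
  replace (- a2 - a1) with (- (a1 + a2)) by ring; replace (- a2 - - a2) with 0 by ring;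
  replace (0 - a1) with (- a1) by ring; replace (0 - - a2) with a2 by ring.
  rewrite !Rminus_0_r, !Rabs_Ropp, Rabs_R0, rpow_0.
  f_equal; [| f_equal]; ring.
Qed.

Lemma tri_mincost_scal l w :
  tri_mincost (l * fst w, l * snd w) = rpow (Rabs l) p * tri_mincost w.
Proof.
  unfold tri_mincost, tri_cost; cbn [fst snd].
  replace (- (l * snd w)) with (l * - snd w) by ring.
  assert (Hs : forall t, dev3 p kx ky kxy (l * fst w) (l * - snd w) 0 (l * t)
                         = rpow (Rabs l) p * dev3 p kx ky kxy (fst w) (- snd w) 0 t)
    by (intro t; rewrite <- dev3_scale, Rmult_0_r; reflexivity).
  replace (dev3 p kx ky kxy (l * fst w) (l * - snd w) 0 0)
    with (dev3 p kx ky kxy (l * fst w) (l * - snd w) 0 (l * 0)) by now rewrite Rmult_0_r.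
  rewrite !Hs, !Rmult_min_distr_l by apply rpow_ge0; reflexivity.
Qed.

Lemma tri_mincost_add u v :
  tri_mincost (fst u + fst v, snd u + snd v) <= tri_mincost u + tri_mincost v.
Proof.
  destruct (tri_mincost_attained u) as [t ->], (tri_mincost_attained v) as [s ->].
  eapply Rle_trans; [apply (tri_mincost_le _ (t + s)) |].
  unfold tri_cost; cbn [fst snd].
  replace (- (snd u + snd v)) with (- snd u + - snd v) by ring.
  rewrite <- (Rplus_0_r 0) at 1; apply dev3_add; lra.
Qed.

Let k0 := Rmin kx (Rmin ky kxy).

Lemma tri_min_weight_pos : 0 < k0.
Proof. unfold k0; repeat apply Rmin_glb_lt; assumption. Qed.

Lemma tri_mincost_ge_coords w :
  k0 * rpow (Rabs (fst w)) p <= tri_mincost w /\ k0 * rpow (Rabs (snd w)) p <= tri_mincost w.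
Proof.
  destruct (tri_mincost_attained w) as [t ->]; unfold tri_cost, dev3.
  assert (k0 <= kx /\ k0 <= ky /\ k0 <= kxy) as (H1 & H2 & H3).
  { pose proof (Rmin_r kx (Rmin ky kxy)); pose proof (Rmin_l ky kxy);
      pose proof (Rmin_r ky kxy); pose proof (Rmin_l kx (Rmin ky kxy)); unfold k0; lra. }
  pose proof tri_min_weight_pos.
  pose proof (rpow_abs_add_le p Hp (- (t - fst w)) (t - 0)) as S1.
  pose proof (rpow_abs_add_le p Hp (t - - snd w) (- (t - 0))) as S2.
  replace (- (t - fst w) + (t - 0)) with (fst w) in S1 by ring.
  replace (t - - snd w + - (t - 0)) with (snd w) in S2 by ring.
  rewrite Rabs_Ropp in S1, S2.
  pose proof (rpow_ge0 (Rabs (t - fst w)) p); pose proof (rpow_ge0 (Rabs (t - 0)) p);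
    pose proof (rpow_ge0 (Rabs (t - - snd w)) p).
  split; nra.
Qed.

Lemma tri_mincost_le_coords w :
  tri_mincost w <= kx * rpow (Rabs (fst w)) p + ky * rpow (Rabs (snd w)) p.
Proof.
  eapply Rle_trans; [apply (tri_mincost_le _ 0) |]; unfold tri_cost, dev3.
  rewrite Rminus_0_r, Rminus_0_l, Rminus_0_l, Ropp_involutive, Rabs_Ropp, Rabs_R0, rpow_0.
  lra.
Qed.

Definition tri_norm (w : R2) : R := rpow (tri_mincost w) (1 / p).

Lemma tri_norm_lt_iff w e : 0 < e -> tri_norm w < e <-> tri_mincost w < rpow e p.
Proof.
  intros He; unfold tri_norm.
  assert (Hq : 0 < 1 / p) by (apply Rdiv_lt_0_compat; lra).
  pose proof (tri_mincost_ge0 w) as Hm.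
  split; intros Hlt.
  - apply (rpow_lt_reg _ _ (1 / p) Hq Hm).
    rewrite rpow_rpow_inv by lra; exact Hlt.
  - rewrite <- (rpow_rpow_inv e p) by lra; apply rpow_lt; lra.
Qed.

Lemma tri_norm_le w e : 0 <= e -> tri_mincost w <= rpow e p -> tri_norm w <= e.
Proof.
  intros He H; unfold tri_norm; rewrite <- (rpow_rpow_inv e p) by lra.
  apply rpow_le; [apply Rdiv_lt_0_compat; lra | split; [apply tri_mincost_ge0 | exact H]].
Qed.

Lemma tri_norm_ge0 w : 0 <= tri_norm w.
Proof. apply rpow_ge0. Qed.

Lemma tri_norm_eq0 w : tri_norm w = 0 -> w = zero.
Proof.
  intros H; apply rpow_eq0 in H; [| apply tri_mincost_ge0].
  destruct (tri_mincost_ge_coords w) as [H1 H2]; rewrite H in H1, H2.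
  destruct w as [w1 w2]; cbn [fst snd] in H1, H2.
  pose proof tri_min_weight_pos.
  pose proof (rpow_ge0 (Rabs w1) p); pose proof (rpow_ge0 (Rabs w2) p).
  assert (E1 : rpow (Rabs w1) p = 0) by nra.
  assert (E2 : rpow (Rabs w2) p = 0) by nra.
  apply rpow_eq0, Rabs_eq_0 in E1; [| apply Rabs_pos].
  apply rpow_eq0, Rabs_eq_0 in E2; [| apply Rabs_pos].
  subst; reflexivity.
Qed.

Lemma tri_norm_scal (l : R) (w : R2) : tri_norm (scal l w) = Rabs l * tri_norm w.
Proof.
  unfold tri_norm; change (scal l w) with ((l * fst w, l * snd w) : R * R).
  rewrite tri_mincost_scal, rpow_mult_distr, rpow_rpow_inv
    by (apply rpow_ge0 || apply tri_mincost_ge0 || apply Rabs_pos || lra).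
  reflexivity.
Qed.

Lemma tri_norm_ptri (u v : R2) :
  rpow (tri_norm (plus u v)) p <= rpow (tri_norm u) p + rpow (tri_norm v) p.
Proof.
  unfold tri_norm; rewrite !rpow_inv_rpow by (lra || apply tri_mincost_ge0).
  apply tri_mincost_add.
Qed.

Lemma tri_norm_small_coords eps : 0 < eps ->
  exists delta, 0 < delta /\
    forall w : R2, tri_norm w < delta -> Rabs (fst w) < eps /\ Rabs (snd w) < eps.
Proof.
  intros He; pose proof tri_min_weight_pos.
  assert (Hd : 0 < k0 * rpow eps p) by (apply Rmult_lt_0_compat; [| apply rpow_gt0]; lra).
  exists (rpow (k0 * rpow eps p) (1 / p)); split; [apply rpow_gt0, Hd |].
  intros w Hw; apply tri_norm_lt_iff in Hw; [| apply rpow_gt0, Hd].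
  rewrite rpow_inv_rpow in Hw by lra.
  destruct (tri_mincost_ge_coords w) as [H1 H2].
  destruct w as [w1 w2]; cbn [fst snd] in *.
  split; apply (rpow_lt_reg _ _ p); try apply Rabs_pos; try lra;
    apply (Rmult_lt_reg_l k0); lra.
Qed.

Lemma tri_norm_small_of_coords eps : 0 < eps ->
  exists delta, 0 < delta /\
    forall w : R2, Rabs (fst w) < delta -> Rabs (snd w) < delta -> tri_norm w < eps.
Proof.
  intros He; set (e := rpow eps p / (kx + ky)).
  assert (Hq : 0 < e) by (apply Rdiv_lt_0_compat; [apply rpow_gt0 |]; lra).
  exists (rpow e (1 / p)); split; [apply rpow_gt0, Hq |].
  intros w H1 H2; apply tri_norm_lt_iff; [exact He |].
  assert (forall z, Rabs z < rpow e (1 / p) -> rpow (Rabs z) p < e).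
  { intros z Hz; rewrite <- (rpow_inv_rpow e p) by lra.
    apply rpow_lt; [lra | split; [apply Rabs_pos | exact Hz]]. }
  eapply Rle_lt_trans; [apply tri_mincost_le_coords |].
  apply Rlt_le_trans with (kx * e + ky * e).
  - apply Rplus_lt_compat; apply Rmult_lt_compat_l; auto.
  - right; unfold e; field; lra.
Qed.

Lemma tri_norm_complete (u : nat -> R2) :
  (forall eps, 0 < eps -> exists N, forall m n, (N <= m)%nat -> (N <= n)%nat ->
     tri_norm (minus (u m) (u n)) < eps) ->
  exists l, forall eps, 0 < eps -> exists N, forall n, (N <= n)%nat ->
     tri_norm (minus (u n) l) < eps.
Proof.
  intros Hu.
  assert (Hc : forall eps, 0 < eps -> exists N, forall m n, (N <= m)%nat -> (N <= n)%nat ->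
     Rabs (fst (u m) - fst (u n)) < eps /\ Rabs (snd (u m) - snd (u n)) < eps).
  { intros eps He; destruct (tri_norm_small_coords eps He) as (delta & Hd & Hsmall).
    destruct (Hu delta Hd) as [N HN]; exists N; intros m n Hm Hn.
    apply (Hsmall (minus (u m) (u n))), HN; assumption. }
  destruct (Rcomplete.R_complete (fun n => fst (u n))) as [l1 Hl1].
  { intros eps He; destruct (Hc eps He) as [N HN]; exists N; intros n m Hn Hm.
    apply HN; assumption. }
  destruct (Rcomplete.R_complete (fun n => snd (u n))) as [l2 Hl2].
  { intros eps He; destruct (Hc eps He) as [N HN]; exists N; intros n m Hn Hm.
    apply HN; assumption. }
  exists ((l1, l2) : R * R); intros eps He.
  destruct (tri_norm_small_of_coords eps He) as (delta & Hd & Hsmall).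
  destruct (Hl1 delta Hd) as [N1 HN1], (Hl2 delta Hd) as [N2 HN2].
  exists (Nat.max N1 N2); intros n Hn.
  apply Hsmall; [apply HN1 | apply HN2]; lia.
Qed.

Definition tri_pBanach : pBanach p :=
  PBanach p R2 tri_norm tri_norm_ge0 tri_norm_eq0 tri_norm_scal tri_norm_ptri
    tri_norm_complete.

End TriangleQuotient.

Definition tri_embed (u : sub3) : R2 :=
  match proj1_sig u with Px => (1, 0) | Py => (0, 1) | _ => (0, 0) end.

Lemma minus_R2 a1 a2 b1 b2 : minus ((a1, a2) : R2) (b1, b2) = (a1 - b1, a2 - b2).
Proof. reflexivity. Qed.

Lemma tri_embed_lipschitz p d : 0 < p < 1 -> is_pmetric p d ->
  let kx := rpow (d Px P0) p in
  let ky := rpow (d Py P0) p in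
  let kxy := rpow (d Px Py) p in
  0 < kx -> 0 < ky -> 0 < kxy ->
  forall u v, tri_norm p kx ky kxy (minus (tri_embed u) (tri_embed v)) <= d3 d u v.
Proof.
  intros Hp (Hd0 & _ & Hsym & _) kx ky kxy Hkx Hky Hkxy [u Hu] [v Hv].
  apply (tri_norm_le p kx ky kxy Hp Hkx Hky Hkxy); [apply Hd0 |].
  pose proof (rpow_ge0 (d u v) p).
  unfold d3, tri_embed; cbn [proj1_sig].
  destruct Hu as [-> | [-> | ->]], Hv as [-> | [-> | ->]];
    rewrite minus_R2, ?Rminus_diag, ?Rminus_0_r, ?Rminus_0_l, tri_mincost_pair;
    unfold triangle_tree_cost;
    rewrite
      ?Rplus_0_l, ?Rplus_0_r, ?Rplus_opp_l, ?Rplus_opp_r, ?Rabs_Ropp, ?Rabs_R0, ?Rabs_R1,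
      ?rpow_0, ?rpow_1_l;
    rewrite ?(Hsym P0 Px), ?(Hsym P0 Py), ?(Hsym Py Px);
    fold kx ky kxy;
    match goal with |- Rmin ?A (Rmin ?B ?C) <= _ =>
      pose proof (Rmin_l A (Rmin B C)); pose proof (Rmin_r A (Rmin B C));
      pose proof (Rmin_l B C); pose proof (Rmin_r B C) end;
    lra.
Qed.

Lemma pmetric_rpow_pos p {S : Type} (d : S -> S -> R) u v :
  is_pmetric p d -> u <> v -> 0 < rpow (d u v) p.
Proof.
  intros (Hd0 & Hdeq & _) Huv; apply rpow_gt0.
  destruct (Hd0 u v) as [| E]; [assumption |].
  exfalso; apply Huv, Hdeq; symmetry; exact E.
Qed.

Lemma Lub_Rbar_max (E : R -> Prop) M :
  E M -> (forall r, E r -> r <= M) -> real (Lub_Rbar E) = M.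
Proof.
  intros HM Hub; rewrite (is_lub_Rbar_unique E M); [reflexivity |].
  split; [intros r Hr; apply Hub, Hr |].
  intros [b | |] Hb; cbn; [apply (Hb M HM) | exact I | apply (Hb M HM)].
Qed.

Lemma scal_plus_scal_l {V : ModuleSpace R_Ring} (X W : V) (a b : R) :
  plus (scal a X) (scal b W) = plus (scal (a + b) X) (scal (- b) (minus X W)).
Proof.
  unfold minus.
  rewrite (scal_distr_r a b X : scal (a + b) X = _), (@scal_distr_l R_Ring V),
    (@scal_opp_r R_Ring V), (@scal_opp_l R_Ring V b X : scal (- b) X = _),
    (@scal_opp_l R_Ring V b W : scal (- b) W = _), opp_opp.
  rewrite <- plus_assoc, (plus_assoc (scal b X)), (@plus_opp_r V), (@plus_zero_l V).
  reflexivity.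
Qed.

Lemma scal_plus_scal_r {V : ModuleSpace R_Ring} (X W : V) (a b : R) :
  plus (scal a X) (scal b W) = plus (scal (a + b) W) (scal a (minus X W)).
Proof.
  unfold minus.
  rewrite (scal_distr_r a b W : scal (a + b) W = _), (@scal_distr_l R_Ring V),
    (@scal_opp_r R_Ring V).
  rewrite (plus_comm (scal a W) (scal b W)), (plus_comm (scal a X) (opp (scal a W))).
  rewrite <- plus_assoc, (plus_assoc (scal a W)), (@plus_opp_r V), (@plus_zero_l V), plus_comm.
  reflexivity.
Qed.

Section PBanachPair.

Variables (p : R) (Y : pBanach p).

Lemma pB_rpow_norm_scal (l : R) (u : Y) :
  rpow (pB_norm Y (scal l u)) p = rpow (Rabs l) p * rpow (pB_norm Y u) p.
Proof.
  rewrite pB_norm_scal, rpow_mult_distr; [reflexivity | apply Rabs_pos | apply pB_norm_ge0].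
Qed.

(* Rewrite [a X + b W] along each spanning tree of the triangle [0, X, W]. *)
Lemma pB_norm_pair_le (X W : Y) a b kx ky kxy :
  rpow (pB_norm Y X) p <= kx -> rpow (pB_norm Y W) p <= ky ->
  rpow (pB_norm Y (minus X W)) p <= kxy ->
  rpow (pB_norm Y (plus (scal a X) (scal b W))) p <= triangle_tree_cost p kx ky kxy a b.
Proof.
  intros HX HW HXW.
  pose proof (rpow_ge0 (Rabs (a + b)) p); pose proof (rpow_ge0 (Rabs a) p);
    pose proof (rpow_ge0 (Rabs b) p).
  assert (Hsum : forall (u v : Y) c e ku kv,
    rpow (pB_norm Y u) p <= ku -> rpow (pB_norm Y v) p <= kv ->
    rpow (pB_norm Y (plus (scal c u) (scal e v))) p
      <= ku * rpow (Rabs c) p + kv * rpow (Rabs e) p).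
  { intros u v c e ku kv Hu Hv; eapply Rle_trans; [apply pB_norm_ptri |].
    rewrite !pB_rpow_norm_scal.
    pose proof (rpow_ge0 (Rabs c) p); pose proof (rpow_ge0 (Rabs e) p).
    apply Rplus_le_compat; [rewrite (Rmult_comm ku) | rewrite (Rmult_comm kv)];
      apply Rmult_le_compat_l; assumption. }
  apply Rmin_glb; [| apply Rmin_glb].
  - rewrite scal_plus_scal_r; apply Hsum; assumption.
  - rewrite scal_plus_scal_l, <- (Rabs_Ropp b); apply Hsum; assumption.
  - apply Hsum; assumption.
Qed.

End PBanachPair.

Lemma Fp_norm_sub3_rpow p d ax ay : 0 < p < 1 -> is_pmetric p d ->
  rpow (Fp_norm p (d3 d) s3_0 ((ax, s3_x) :: (ay, s3_y) :: nil)) p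
  = triangle_tree_cost p (rpow (d Px P0) p) (rpow (d Py P0) p) (rpow (d Px Py) p) ax ay.
Proof.
  intros Hp hd.
  set (kx := rpow (d Px P0) p); set (ky := rpow (d Py P0) p); set (kxy := rpow (d Px Py) p).
  assert (Hkx : 0 < kx) by (apply (pmetric_rpow_pos p d); [exact hd | discriminate]).
  assert (Hky : 0 < ky) by (apply (pmetric_rpow_pos p d); [exact hd | discriminate]).
  assert (Hkxy : 0 < kxy) by (apply (pmetric_rpow_pos p d); [exact hd | discriminate]).
  set (M := triangle_tree_cost p kx ky kxy ax ay).
  assert (HM : 0 <= M).
  { unfold M; rewrite <- (tri_mincost_pair p kx ky kxy); apply tri_mincost_ge0; lra. }
  unfold Fp_norm; rewrite (Lub_Rbar_max _ (rpow M (1 / p))); [apply rpow_inv_rpow; lra | |].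
  - exists (tri_pBanach p kx ky kxy Hp Hkx Hky Hkxy), tri_embed.
    split; [reflexivity | split; [apply tri_embed_lipschitz; assumption |]].
    change (rpow M (1 / p) = rpow (tri_mincost p kx ky kxy
      ((ax * 1 + (ay * 0 + 0), ax * 0 + (ay * 1 + 0)) : R * R)) (1 / p)).
    unfold M; rewrite <- tri_mincost_pair; do 3 f_equal; ring.
  - intros r (Y & f & Hf0 & Hlip & ->); cbn [vsum List.map fst snd]; rewrite plus_zero_r.
    apply (rpow_le_reg _ _ p); [lra | apply rpow_ge0 |].
    rewrite rpow_inv_rpow by lra.
    assert (Hbound : forall u v, rpow (pB_norm Y (minus (f u) (f v))) p <= rpow (d3 d u v) p)
      by (intros u v; apply rpow_le; [lra | split; [apply pB_norm_ge0 | apply Hlip]]).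
    pose proof (Hbound s3_x s3_0) as Hx; pose proof (Hbound s3_y s3_0) as Hy.
    rewrite Hf0, (@minus_zero_r (ModuleSpace.AbelianGroup _ (pB_space p Y))) in Hx, Hy.
    apply pB_norm_pair_le; [assumption | assumption | apply Hbound].
Qed.

(** * Gromov products *)

Lemma triangle_weights_nonneg S U V e1 e2 e3 :
  0 <= S -> 0 <= U -> 0 <= V -> S <= U + V -> U <= S + V -> V <= S + U ->
  0 <= e1 + e2 -> 0 <= e1 + e3 -> 0 <= e2 + e3 -> 0 <= S * e1 + U * e2 + V * e3.
Proof.
  intros; destruct (Rle_lt_dec 0 e1), (Rle_lt_dec 0 e2), (Rle_lt_dec 0 e3); nra.
Qed.

Lemma Rmin3_eq_iff a x y z : a <= x -> a <= y -> a <= z ->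
  a = Rmin x (Rmin y z) <-> a = x \/ a = y \/ a = z.
Proof.
  intros Hx Hy Hz; unfold Rmin; destruct (Rle_dec y z), (Rle_dec x _); lra.
Qed.

(* The weights are the Gromov products at 0, x and y of the metric with
   d(x, 0) = kx, d(y, 0) = ky, d(x, y) = kxy. *)
Definition gromov_sum S U V kx ky kxy :=
  S * ((kx + ky - kxy) / 2) + U * ((kxy + kx - ky) / 2) + V * ((kxy + ky - kx) / 2).

Section GromovSum.

Variables S U V kx ky kxy : R.
Hypotheses (HS : 0 <= S) (HU : 0 <= U) (HV : 0 <= V).
Hypotheses (HSUV : S <= U + V) (HUSV : U <= S + V) (HVSU : V <= S + U).
Hypotheses (Hxy : kxy <= kx + ky) (Hy : ky <= kx + kxy) (Hx : kx <= kxy + ky).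

Lemma gromov_sum_le_tree A B Z : kx <= A + Z -> ky <= B + Z -> kxy <= A + B ->
  gromov_sum S U V kx ky kxy <= U * A + V * B + S * Z.
Proof.
  intros HA HB HZ.
  pose proof (triangle_weights_nonneg S U V (Z - (kx + ky - kxy) / 2)
    (A - (kxy + kx - ky) / 2) (B - (kxy + ky - kx) / 2)).
  unfold gromov_sum; lra.
Qed.

Let M := Rmin (ky * S + kxy * U) (Rmin (kx * S + kxy * V) (kx * U + ky * V)).

Lemma gromov_sum_defects :
  ky * S + kxy * U - gromov_sum S U V kx ky kxy = (ky + kxy - kx) / 2 * (S + U - V) /\
  kx * S + kxy * V - gromov_sum S U V kx ky kxy = (kx + kxy - ky) / 2 * (S + V - U) /\
  kx * U + ky * V - gromov_sum S U V kx ky kxy = (kx + ky - kxy) / 2 * (U + V - S).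
Proof. unfold gromov_sum; repeat split; field. Qed.

Lemma gromov_sum_le_trees :
  gromov_sum S U V kx ky kxy <= ky * S + kxy * U /\
  gromov_sum S U V kx ky kxy <= kx * S + kxy * V /\
  gromov_sum S U V kx ky kxy <= kx * U + ky * V.
Proof.
  destruct gromov_sum_defects as (D1 & D2 & D3).
  assert (0 <= (ky + kxy - kx) / 2 * (S + U - V)) by (apply Rmult_le_pos; lra).
  assert (0 <= (kx + kxy - ky) / 2 * (S + V - U)) by (apply Rmult_le_pos; lra).
  assert (0 <= (kx + ky - kxy) / 2 * (U + V - S)) by (apply Rmult_le_pos; lra).
  lra.
Qed.

Lemma gromov_sum_le_min : gromov_sum S U V kx ky kxy <= M.
Proof.
  destruct gromov_sum_le_trees as (H1 & H2 & H3).
  unfold M; repeat apply Rmin_glb; assumption.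
Qed.

Lemma gromov_sum_eq_min :
  gromov_sum S U V kx ky kxy = M <->
  kx + ky = kxy \/ kx + kxy = ky \/ ky + kxy = kx \/ U + V = S \/ S + V = U \/ S + U = V.
Proof.
  destruct gromov_sum_defects as (D1 & D2 & D3).
  destruct gromov_sum_le_trees as (H1 & H2 & H3).
  assert (Hdefect : forall a x g t g' t', x - a = g * t ->
            (g = 0 <-> g') -> (t = 0 <-> t') -> (a = x <-> g' \/ t')).
  { intros a x g t g' t' Hd Hg Ht; rewrite <- Hg, <- Ht; split.
    - intros E; apply Rmult_integral; rewrite <- Hd, E; ring.
    - intros [Z | Z]; rewrite Z in Hd; lra. }
  assert (Hhalf : forall b c e, (b + c - e) / 2 = 0 <-> b + c = e)
    by (intros; split; intros; lra).
  assert (Hdiff : forall b c e, b + c - e = 0 <-> b + c = e)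
    by (intros; split; intros; lra).
  unfold M; rewrite Rmin3_eq_iff by assumption.
  rewrite (Hdefect _ _ _ _ _ _ D1 (Hhalf _ _ _) (Hdiff _ _ _)),
    (Hdefect _ _ _ _ _ _ D2 (Hhalf _ _ _) (Hdiff _ _ _)),
    (Hdefect _ _ _ _ _ _ D3 (Hhalf _ _ _) (Hdiff _ _ _)).
  tauto.
Qed.

End GromovSum.

Lemma tree_T4_rpow p d a : 0 < p -> (forall u v, 0 <= d u v) -> a Pz = 0 ->
  rpow (tree_T p T4_nonroot T4_pred T4_V d a) p
  = rpow (Rabs (a Px)) p * rpow (d Pz Px) p + rpow (Rabs (a Py)) p * rpow (d Pz Py) p
    + rpow (Rabs (a Px + a Py)) p * rpow (d P0 Pz) p.
Proof.
  intros Hp Hd0 Haz.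
  unfold tree_T, T4_nonroot, T4_pred, T4_V; cbn [List.map Rsum_list]; rewrite Haz.
  rewrite rpow_inv_rpow
    by (try assumption; repeat apply Rplus_le_le_0_compat; try apply rpow_ge0; lra).
  rewrite !Rabs_mult, !rpow_mult_distr, !(Rabs_pos_eq (d _ _)) by apply Rabs_pos || apply Hd0.
  replace (0 + (a Px + (a Py + 0))) with (a Px + a Py) by ring.
  rewrite !Rplus_0_r; ring.
Qed.

Theorem lemma3p7 (p : R) (hp0 : 0 < p) (hp1 : p < 1)
  (d : pt4 -> pt4 -> R) (hd : is_pmetric p d)
  (a : pt4 -> R) (haz : a Pz = 0) :
  let dx0 := rpow (d Px P0) p in
  let dy0 := rpow (d Py P0) p in
  let dxy := rpow (d Px Py) p in
  let C := rpow (Rabs (a Px + a Py)) p * ((dx0 + dy0 - dxy) / 2)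
         + rpow (Rabs (a Px)) p * ((dxy + dx0 - dy0) / 2)
         + rpow (Rabs (a Py)) p * ((dxy + dy0 - dx0) / 2) in
  let N := Fp_norm p (d3 d) s3_0 ((a Px, s3_x) :: (a Py, s3_y) :: nil) in
  C <= rpow (tree_T p T4_nonroot T4_pred T4_V d a) p /\
  C <= rpow N p /\
  (C = rpow N p <->
     (dx0 + dy0 = dxy \/ dx0 + dxy = dy0 \/ dy0 + dxy = dx0 \/
      a Px * a Py = 0 \/ a Px = - a Py)).
Proof.
  cbv zeta.
  assert (Hp : 0 < p < 1) by lra.
  pose proof hd as (Hd0 & _ & Hsym & Htri).
  assert (Hs : forall u v, rpow (d u v) p = rpow (d v u) p) by (intros; rewrite Hsym; reflexivity).
  pose proof (Htri Px P0 Py) as Txy; pose proof (Htri Py Px P0) as Ty;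
    pose proof (Htri Px Py P0) as Tx.
  pose proof (Htri Px Pz P0) as Tzx; pose proof (Htri Py Pz P0) as Tzy;
    pose proof (Htri Px Pz Py) as Tzxy.
  rewrite (Hs P0 Py) in Txy; rewrite (Hs Py Px) in Ty;
    rewrite (Hs Px Pz), (Hs Pz P0) in Tzx; rewrite (Hs Py Pz), (Hs Pz P0) in Tzy;
    rewrite (Hs Px Pz) in Tzxy.
  destruct (rpow_abs_triangle p Hp (a Px) (a Py)) as (T1 & T2 & T3).
  split; [| rewrite Fp_norm_sub3_rpow by assumption; split].
  - rewrite tree_T4_rpow by assumption.
    apply gromov_sum_le_tree; try apply rpow_ge0; lra.
  - apply gromov_sum_le_min; lra.
  - rewrite <- rpow_abs_triangle_eq by exact Hp.
    apply gromov_sum_eq_min; lra.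
Qed.
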